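(* Let $f:\mathbb{R}^n\to\mathbb{R}$ be bounded below and continuously differentiable with $\nabla f$ Lipschitz with constant $L_{\nabla f}$. Let $x\in\mathbb{R}^n$, $\Delta>0$, points $y_1,\ldots,y_p$ with $\|y_i-x\|\le\beta\Delta$ for some $\beta>0$ and all $i$, and let $m$ be the minimum Frobenius norm quadratic interpolation model described in the context, with $\hat F$ invertible. Then for all $y\in B(x,\Delta)$, $|m(y)-f(y)|\le\kappa_{\mathrm{mf}}\Delta^2$ and $\|\nabla m(y)-\nabla f(y)\|\le\kappa_{\mathrm{mg}}\Delta$, where $$\kappa_{\mathrm{mf}}=\frac{L_{\nabla f}+\kappa_H}{2}(1+\sqrt n)\beta^2\|\hat M^\dagger\|_\infty+\frac{L_{\nabla f}+\kappa_H}{2},\qquad\kappa_{\mathrm{mg}}=2\kappa_{\mathrm{mf}}+2\kappa_H,$$ and $\kappa_H:=\frac{L_{\nabla f}}{2}p\beta^4\|\hat F^{-1}\|_\infty$.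
   Context: Here $n+2\le p\le(n+1)(n+2)/2-1$. Let $\hat s_i=(y_i-x)/\Delta$, $\hat M\in\mathbb{R}^{p\times(n+1)}$ with $i$-th row $[1,\hat s_i^T]$ (with Moore–Penrose pseudoinverse $\hat M^\dagger$), $\hat P\in\mathbb{R}^{p\times p}$ with $\hat P_{ij}=\tfrac12(\hat s_i^T\hat s_j)^2$, and $\hat F=\begin{bmatrix}\hat P&\hat M\\ \hat M^T&0\end{bmatrix}$. The model is $m(y)=c+g^T(y-x)+\tfrac12(y-x)^TH(y-x)$ where $(\hat\lambda_1,\ldots,\hat\lambda_p,c,\hat g)$ solves $\hat F[\hat\lambda;c;\hat g]=[f(y_1);\ldots;f(y_p);0;0_n]$, $g=\hat g/\Delta$, $H=\sum_{i}\lambda_i(y_i-x)(y_i-x)^T$ with $\lambda_i=\hat\lambda_i/\Delta^4$; equivalently $(c,g,H)$ minimizes $\tfrac14\|H\|_F^2$ over symmetric $H$ subject to $m(y_i)=f(y_i)$ for all $i$. $\|A\|_\infty$ is the maximum absolute row sum; $B(x,\Delta)=\{y:\|y-x\|\le\Delta\}$. *)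

From HB Require Import structures.
From mathcomp Require Import all_boot all_order all_algebra.
From mathcomp Require Import all_classical all_reals all_analysis.
Set Implicit Arguments.
Unset Strict Implicit.
Unset Printing Implicit Defensive.
Import Order.TTheory GRing.Theory Num.Theory.
Import numFieldNormedType.Exports.
Local Open Scope ring_scope.

Section Defs.
Variable R : realType.

Definition dotv {n : nat} (u v : 'rV[R]_n) : R := \sum_(j < n) u 0 j * v 0 j.
Definition enorm {n : nat} (v : 'rV[R]_n) : R := Num.sqrt (dotv v v).

Definition grad {n : nat} (f : 'rV[R]_n -> R) (x : 'rV[R]_n) : 'rV[R]_n :=
  \row_(j < n) ('d f x (delta_mx 0 j : 'rV[R]_n)).

Definition inf_norm {m k : nat} (A : 'M[R]_(m, k)) : R :=
  \big[Num.max/0]_(i < m) \sum_(j < k) `|A i j|.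

Definition is_MP_pinv {m k : nat} (A : 'M[R]_(m, k)) (X : 'M[R]_(k, m)) : Prop :=
  [/\ A *m X *m A = A, X *m A *m X = X,
      (A *m X)^T = A *m X & (X *m A)^T = X *m A].

Variables (n p : nat) (x : 'rV[R]_n) (Delta : R) (ys : 'I_p -> 'rV[R]_n).

Definition shat (i : 'I_p) : 'rV[R]_n := Delta^-1 *: (ys i - x).

Definition Mhat : 'M[R]_(p, 1 + n) :=
  row_mx (const_mx 1) (\matrix_(i < p, j < n) shat i 0 j).

Definition Phat : 'M[R]_p :=
  \matrix_(i < p, j < p) (2^-1 * (dotv (shat i) (shat j)) ^+ 2).

Definition Fhat : 'M[R]_(p + (1 + n)) := block_mx Phat Mhat Mhat^T 0.

Variable f : 'rV[R]_n -> R.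

Definition rhs : 'cV[R]_(p + (1 + n)) := col_mx (\col_(i < p) f (ys i)) 0.

Definition sol : 'cV[R]_(p + (1 + n)) := invmx Fhat *m rhs.

Definition lamhat (i : 'I_p) : R := sol (lshift (1 + n) i) 0.
Definition cmod : R := sol (rshift p (lshift n (0 : 'I_1))) 0.
Definition ghat : 'rV[R]_n := \row_(j < n) sol (rshift p (rshift 1 j)) 0.

Definition gmod : 'rV[R]_n := Delta^-1 *: ghat.
Definition lam (i : 'I_p) : R := lamhat i / Delta ^+ 4.
Definition Hmod : 'M[R]_n := \sum_(i < p) lam i *: ((ys i - x)^T *m (ys i - x)).

Definition model (y : 'rV[R]_n) : R :=
  cmod + dotv gmod (y - x) + 2^-1 * ((y - x) *m Hmod *m (y - x)^T) 0 0.

End Defs.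

From HB Require Import structures.
From mathcomp Require Import all_boot all_order all_algebra.
From mathcomp Require Import all_classical all_reals all_analysis.
From mathcomp.algebra_tactics Require Import ring lra.
Import Order.TTheory GRing.Theory Num.Theory.
Import numFieldNormedType.Exports.
Set Implicit Arguments.
Unset Strict Implicit.
Unset Printing Implicit Defensive.
Local Open Scope ring_scope.

(* Write d_i = y_i - x and let r_i = f(y_i) - f(x) - grad f(x)^T d_i be the
   first-order Taylor residuals, |r_i| <= L/2 (beta Delta)^2 by the descent lemma.
   Since Fhat [0; f(x); Delta grad f(x)] = [(f(x) + grad f(x)^T d_i)_i; 0], the
   weights lamhat are the first block of Fhat^-1 [r; 0], which bounds the model
   Hessian H = sum_i lam_i d_i d_i^T by kH.  Interpolation says that Mhat applied
   to the coefficient errors [c - f(x); Delta (g - grad f(x))] gives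
   r_i - 1/2 d_i^T H d_i, and Mhat is injective because Fhat is invertible, so
   Mhat^+ recovers these errors.  Both claims then follow by expanding m - f at y
   around x, using the descent lemma once more. *)

Section Euclidean.
Context {R : realType} {n : nat}.
Implicit Types u v w : 'rV[R]_n.

Lemma dotvC u v : dotv u v = dotv v u.
Proof. by apply: eq_bigr => j _; rewrite mulrC. Qed.

Lemma dotvDl u v w : dotv (u + v) w = dotv u w + dotv v w.
Proof. by rewrite /dotv -big_split; apply: eq_bigr => j _; rewrite mxE mulrDl. Qed.

Lemma dotvZl a u v : dotv (a *: u) v = a * dotv u v.
Proof. by rewrite /dotv mulr_sumr; apply: eq_bigr => j _; rewrite mxE mulrA. Qed.

Lemma dotvNl u v : dotv (- u) v = - dotv u v.
Proof. by rewrite -scaleN1r dotvZl mulN1r. Qed.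

Lemma dotvBl u v w : dotv (u - v) w = dotv u w - dotv v w.
Proof. by rewrite dotvDl dotvNl. Qed.

Lemma dotvDr u v w : dotv u (v + w) = dotv u v + dotv u w.
Proof. by rewrite !(dotvC u) dotvDl. Qed.

Lemma dotvZr a u v : dotv u (a *: v) = a * dotv u v.
Proof. by rewrite !(dotvC u) dotvZl. Qed.

Lemma dotvBr u v w : dotv u (v - w) = dotv u v - dotv u w.
Proof. by rewrite !(dotvC u) dotvBl. Qed.

Lemma dotv_mx u v : (u *m v^T) 0 0 = dotv u v.
Proof. by rewrite mxE; apply: eq_bigr => j _; rewrite mxE. Qed.

Lemma dotv_delta u j : dotv u (delta_mx 0 j) = u 0 j.
Proof.
rewrite /dotv (bigD1 j) //= big1 => [|k kj]; first by rewrite mxE !eqxx mulr1 addr0.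
by rewrite mxE (negbTE kj) andbF mulr0.
Qed.

Lemma dotvv_ge0 u : 0 <= dotv u u.
Proof. by apply: sumr_ge0 => j _; rewrite -expr2 sqr_ge0. Qed.

Lemma enorm_ge0 u : 0 <= enorm u.
Proof. exact: sqrtr_ge0. Qed.

Lemma sqr_enorm u : enorm u ^+ 2 = dotv u u.
Proof. by rewrite sqr_sqrtr // dotvv_ge0. Qed.

Lemma enormZ a u : enorm (a *: u) = `|a| * enorm u.
Proof. by rewrite /enorm dotvZl dotvZr mulrA -expr2 sqrtrM ?sqr_ge0 // sqrtr_sqr. Qed.

Lemma enormN u : enorm (- u) = enorm u.
Proof. by rewrite -scaleN1r enormZ normrN normr1 mul1r. Qed.

Lemma enorm_delta j : enorm (delta_mx 0 j : 'rV[R]_n) = 1.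
Proof. by rewrite /enorm dotv_delta mxE !eqxx sqrtr1. Qed.

(* Evaluate the nonnegative quadratic [t |-> dotv (u - t v) (u - t v)] at its minimiser. *)
Lemma dotv_sqr_le u v : dotv u v ^+ 2 <= dotv u u * dotv v v.
Proof.
have [v0|v_neq0] := eqVneq (dotv v v) 0.
  suff -> : dotv u v = 0 by rewrite expr0n mulr_ge0 ?dotvv_ge0.
  have /eqP := v0; rewrite psumr_eq0 => [/allP v0j|j _]; last by rewrite -expr2 sqr_ge0.
  rewrite /dotv big1 // => j _.
  by have := v0j j (mem_index_enum j); rewrite -expr2 sqrf_eq0 => /eqP ->; rewrite mulr0.
have vv_gt0 : 0 < (dotv v v)^-1 by rewrite invr_gt0 lt_def v_neq0 dotvv_ge0.
rewrite -subr_ge0 -(pmulr_lge0 _ vv_gt0).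
set t := dotv u v / dotv v v.
suff -> : (dotv u u * dotv v v - dotv u v ^+ 2) / dotv v v
          = dotv (u - t *: v) (u - t *: v) by exact: dotvv_ge0.
by rewrite dotvBl !dotvBr !dotvZl !dotvZr (dotvC v u) /t; field.
Qed.

Lemma ler_norm_dotv u v : `|dotv u v| <= enorm u * enorm v.
Proof.
rewrite /enorm -sqrtrM ?dotvv_ge0 // -sqrtr_sqr.
exact: ler_wsqrtr (dotv_sqr_le u v).
Qed.

Lemma ler_enormD u v : enorm (u + v) <= enorm u + enorm v.
Proof.
rewrite -(ler_pXn2r (n := 2)) ?nnegrE ?addr_ge0 ?enorm_ge0 //.
rewrite sqr_enorm dotvDl !dotvDr (dotvC v u) sqrrD !sqr_enorm.
have := ler_norm_dotv u v; have := ler_norm (dotv u v); lra.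
Qed.

Lemma enorm_le_coord u c : (forall j, `|u 0 j| <= c) -> enorm u <= Num.sqrt n%:R * c.
Proof.
case: n u => [|k] u u_le; first by rewrite /enorm /dotv !big_ord0 sqrtr0 mul0r.
have c_ge0 : 0 <= c by exact: le_trans (u_le ord0).
rewrite /enorm -(ger0_norm c_ge0) -sqrtr_sqr -sqrtrM // ler_wsqrtr //.
apply: (@le_trans _ _ (\sum_(j < k.+1) c ^+ 2)); last first.
  by rewrite sumr_const card_ord mulr_natl.
rewrite ler_sum // => j _.
by rewrite -expr2 -real_normK ?num_real // lerXn2r ?nnegrE.
Qed.

End Euclidean.

Lemma lipschitz_ge0 {R : realType} {n : nat} (g : 'rV[R]_n -> 'rV[R]_n) (L : R) :
  (0 < n)%N ->
  (forall v w, enorm (g v - g w) <= L * enorm (v - w)) -> 0 <= L.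
Proof.
case: n g => // k g _ /(_ (delta_mx 0 ord0) 0).
by rewrite subr0 enorm_delta mulr1; apply: le_trans (enorm_ge0 _).
Qed.

Section Matrices.
Context {R : realType}.

Lemma inf_norm_ge0 m k (A : 'M[R]_(m, k)) : 0 <= inf_norm A.
Proof. exact: bigmax_ge_id. Qed.

Lemma norm_mulmx_le_inf_norm m k (A : 'M[R]_(m, k)) (c : 'cV[R]_k) rho i :
  0 <= rho -> (forall j, `|c j 0| <= rho) -> `|(A *m c) i 0| <= inf_norm A * rho.
Proof.
move=> rho_ge0 c_le; rewrite mxE.
apply: le_trans (ler_norm_sum _ _ _) _.
apply: (@le_trans _ _ ((\sum_j `|A i j|) * rho)).
  by rewrite mulr_suml ler_sum // => j _; rewrite normrM ler_wpM2l.
by rewrite ler_wpM2r // (le_bigmax _ (fun i => \sum_j `|A i j|) i).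
Qed.

Lemma MP_pinv_mulKmx m k (A : 'M[R]_(m, k)) X (u : 'cV[R]_k) :
  is_MP_pinv A X -> (forall v : 'cV[R]_k, A *m v = 0 -> v = 0) -> X *m (A *m u) = u.
Proof.
case=> AXA _ _ _ A_inj; apply/eqP; rewrite -subr_eq0; apply/eqP/A_inj.
by rewrite mulmxBr !mulmxA AXA subrr.
Qed.

End Matrices.

Section OneVariable.
Context {R : realType}.

Lemma is_derive_quadratic (c a b t : R) :
  is_derive t 1 (fun s : R => c + a * s + b * (s * s)) (a + b * (t + t)).
Proof.
have hid := is_derive_id t (1 : R).
have := is_deriveD (is_deriveD (is_derive_cst c t 1) (is_deriveZ a hid))
  (is_deriveZ b (is_deriveM hid hid)).
by move/is_derive_eq; apply; rewrite /= /GRing.scale /= !mulr1 add0r.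
Qed.

Lemma ler_increment_derive1 (phi psi : R -> R) :
  (forall t, derivable phi t 1) -> (forall t, derivable psi t 1) ->
  (forall t, 0 < t < 1 -> derive1 phi t <= derive1 psi t) ->
  phi 1 - phi 0 <= psi 1 - psi 0.
Proof.
move=> dphi dpsi le_d.
have d_diff t : derivable (phi - psi) t 1 by exact: derivableB.
suff : phi 1 - psi 1 <= phi 0 - psi 0 by lra.
apply: (@ler0_derive1_le_cc _ (phi - psi) 0 1).
- by move=> t _.
- move=> t; rewrite in_itv /= => t01.
  by rewrite derive1E deriveB // -!derive1E subr_le0 le_d.
- by apply: derivable_within_continuous => t _.
- by rewrite in_itv /= ler01 lexx.
- by rewrite in_itv /= ler01 lexx.
- exact: ler01.
Qed.

Lemma increment_derive1_bound (psi : R -> R) (a b : R) :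
  (forall t, derivable psi t 1) ->
  (forall t, 0 < t < 1 -> `|derive1 psi t - a| <= b * t) ->
  `|psi 1 - psi 0 - a| <= b / 2.
Proof.
move=> dpsi psi'_near.
pose q (e : R) := fun s : R => 0 + a * s + e * (b / 2) * (s * s).
have dq e t : derivable (q e) t 1 by have [] := is_derive_quadratic 0 a (e * (b / 2)) t.
have q'E e t : derive1 (q e) t = a + e * (b * t).
  by rewrite derive1E; have [_ ->] := is_derive_quadratic 0 a (e * (b / 2)) t; field.
have qE e : q e 1 - q e 0 = a + e * (b / 2) by rewrite /q; ring.
rewrite ler_norml; apply/andP; split.
- have := @ler_increment_derive1 (q (-1)) psi (dq _) dpsi; rewrite qE.
  have le_d t : 0 < t < 1 -> derive1 (q (-1)) t <= derive1 psi t.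
    by move/psi'_near; rewrite q'E ler_norml => /andP[]; lra.
  by move/(_ le_d); lra.
- have := @ler_increment_derive1 psi (q 1) dpsi (dq _); rewrite qE.
  have le_d t : 0 < t < 1 -> derive1 psi t <= derive1 (q 1) t.
    by move/psi'_near; rewrite q'E ler_norml => /andP[]; lra.
  by move/(_ le_d); lra.
Qed.

End OneVariable.

Section Gradient.
Context {R : realType} {n : nat}.
Implicit Types (f : 'rV[R]_n -> R) (u v w x y z : 'rV[R]_n).

Lemma diff_dotv_grad f z v : 'd f z v = dotv (grad f z) v.
Proof.
rewrite {1}(row_sum_delta v) linear_sum /dotv; apply: eq_bigr => j _.
by rewrite linearZ /= mxE mulrC.
Qed.

Lemma derive1_along_line f z d t : differentiable f (z + t *: d) ->
  derivable (fun s : R => f (z + s *: d)) t 1 /\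
  derive1 (fun s : R => f (z + s *: d)) t = dotv (grad f (z + t *: d)) d.
Proof.
move=> df.
have quotE : (fun h : R => h^-1 *: ((fun s => f (z + s *: d)) (h *: 1 + t) - f (z + t *: d)))
  = (fun h : R => h^-1 *: (f (h *: d + (z + t *: d)) - f (z + t *: d))).
  by apply/funext => h; rewrite [h *: 1]mulr1 scalerDl addrCA addrC.
split; first by rewrite /derivable quotE; exact: diff_derivable.
by rewrite derive1E /derive quotE -diff_dotv_grad; exact: deriveE.
Qed.

(* The derivative of [t |-> f (z + t d)] moves by at most [L t |d|^2] on [0, 1]. *)
Lemma descent_lemma f L z d : (forall w, differentiable f w) ->
  (forall v w, enorm (grad f v - grad f w) <= L * enorm (v - w)) ->
  `|f (z + d) - f z - dotv (grad f z) d| <= L / 2 * enorm d ^+ 2.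
Proof.
move=> df lip.
have := @increment_derive1_bound _ (fun s => f (z + s *: d))
  (dotv (grad f z) d) (L * enorm d ^+ 2).
rewrite scale1r scale0r addr0 [L / 2 * _]mulrAC; apply.
  by move=> t; have [] := derive1_along_line (df (z + t *: d)).
move=> t /andP[t_gt0 _]; have [_ ->] := derive1_along_line (df (z + t *: d)).
rewrite -dotvBl; apply: le_trans (ler_norm_dotv _ _) _.
have := lip (z + t *: d) z.
have -> : z + t *: d - z = t *: d by rewrite addrC addKr.
rewrite enormZ (gtr0_norm t_gt0) => lip_t.
have -> : L * enorm d ^+ 2 * t = L * (t * enorm d) * enorm d by ring.
exact (ler_wpM2r (enorm_ge0 d) lip_t).
Qed.

Lemma derive_of_quadratic_line (F : 'rV[R]_n -> R) y v (B C : R) :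
  (forall h : R, F (h *: v + y) = F y + h * B + h * h * C) -> 'D_v F y = B.
Proof.
move=> Fline; pose q (s : R) := F y + B * s + C * (s * s).
have quotE : (fun h : R => h^-1 *: (F (h *: v + y) - F y)) =
  (fun h : R => h^-1 *: (q (h *: 1 + 0) - q 0)).
  by apply/funext => h; rewrite /q Fline [h *: 1]mulr1; congr (_ *: _); ring.
rewrite /derive quotE -/(derive q 0 1).
have [_ ->] := is_derive_quadratic (F y) B C 0.
by rewrite addr0 mulr0 addr0.
Qed.

Lemma differentiable_dotv (a b : 'rV[R]_n -> 'rV[R]_n) y :
  (forall j, differentiable (fun z => a z 0 j) y) ->
  (forall j, differentiable (fun z => b z 0 j) y) ->
  differentiable (fun z => dotv (a z) (b z)) y.
Proof.
move=> da db; rewrite /dotv -fct_sumE; apply: differentiable_sum => j.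
exact: differentiableM.
Qed.

Lemma differentiable_sub_coord x y j : differentiable (fun z : 'rV[R]_n => (z - x) 0 j) y.
Proof.
have -> : (fun z : 'rV[R]_n => (z - x) 0 j) = (fun z => z 0 j - x 0 j).
  by apply/funext => z; rewrite !mxE.
exact: differentiableB (differentiable_coord _ _ _) (differentiable_cst _ _).
Qed.

Lemma dotv_mulmx_sym (H : 'M[R]_n) u v : H^T = H -> dotv (u *m H) v = dotv (v *m H) u.
Proof.
move=> HT; rewrite -!dotv_mx.
have -> : (u *m H *m v^T) 0 0 = ((u *m H *m v^T)^T) 0 0 by rewrite [RHS]mxE.
by rewrite !trmx_mul trmxK HT mulmxA.
Qed.

Lemma differentiable_quadratic (c : R) g (H : 'M[R]_n) x y :
  differentiable (fun z => c + dotv g (z - x) + 2^-1 * ((z - x) *m H *m (z - x)^T) 0 0) y.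
Proof.
apply: differentiableD; last apply: differentiableM.
- apply: differentiableD; first exact: differentiable_cst.
  by apply: differentiable_dotv => j; [exact: differentiable_cst|exact: differentiable_sub_coord].
- exact: differentiable_cst.
under eq_fun do rewrite dotv_mx.
apply: differentiable_dotv => j; last exact: differentiable_sub_coord.
have -> : (fun z => ((z - x) *m H) 0 j) = (fun z => dotv (z - x) (col j H)^T).
  by apply/funext => z; rewrite mxE; apply: eq_bigr => k _; rewrite !mxE.
by apply: differentiable_dotv => k; [exact: differentiable_sub_coord|exact: differentiable_cst].
Qed.

Lemma grad_quadratic (c : R) g (H : 'M[R]_n) x y : H^T = H ->
  grad (fun z => c + dotv g (z - x) + 2^-1 * ((z - x) *m H *m (z - x)^T) 0 0) y
  = g + (y - x) *m H.
Proof.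
move=> HT; set q := fun z => _.
apply/rowP => j; rewrite /grad mxE -deriveE; last exact: differentiable_quadratic.
rewrite -[(g + _) 0 j]dotv_delta dotvDl.
move: (delta_mx 0 j : 'rV[R]_n) => e.
apply: (@derive_of_quadratic_line _ _ _ _ (2^-1 * dotv (e *m H) e)) => h.
rewrite /q (_ : h *: e + y - x = (y - x) + h *: e); last by rewrite -addrA addrC.
move: (y - x) => u.
rewrite !dotv_mx mulmxDl !(dotvDl, dotvDr) -!scalemxAl !(dotvZl, dotvZr).
by rewrite (dotv_mulmx_sym e u HT); field.
Qed.

End Gradient.

Section OuterProductSum.
Context {R : realType} {n p : nat}.
Variables (lam : 'I_p -> R) (d : 'I_p -> 'rV[R]_n).

Lemma outer_sum_sym : (\sum_i lam i *: ((d i)^T *m d i))^T = \sum_i lam i *: ((d i)^T *m d i).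
Proof.
by rewrite raddf_sum /=; apply: eq_bigr => i _; rewrite linearZ /= trmx_mul trmxK.
Qed.

Lemma outer_sum_form u v :
  dotv (u *m \sum_i lam i *: ((d i)^T *m d i)) v
  = \sum_i lam i * (dotv u (d i) * dotv (d i) v).
Proof.
rewrite -dotv_mx mulmx_sumr mulmx_suml summxE; apply: eq_bigr => i _.
rewrite -scalemxAr -scalemxAl mxE !mulmxA -(mulmxA _ (d i)) mxE big_ord1.
by rewrite !dotv_mx (dotvC (d i)).
Qed.

Lemma outer_sum_form_bound K r u v :
  (forall i, `|lam i| <= K) -> (forall i, enorm (d i) <= r) ->
  `|dotv (u *m \sum_i lam i *: ((d i)^T *m d i)) v|
  <= p%:R * K * r ^+ 2 * (enorm u * enorm v).
Proof.
move=> lam_le d_le; rewrite outer_sum_form; apply: le_trans (ler_norm_sum _ _ _) _.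
rewrite -[p in p%:R]card_ord -sumr_const !mulr_suml; apply: ler_sum => i _.
rewrite mul1r -mulrA normrM; apply: ler_pM; rewrite ?normr_ge0 //.
rewrite normrM (dotvC (d i) v).
apply: le_trans (ler_pM _ _ (ler_norm_dotv u (d i)) (ler_norm_dotv v (d i))) _;
  rewrite ?normr_ge0 //.
rewrite mulrACA mulrC; apply: ler_wpM2r; first by rewrite mulr_ge0 ?enorm_ge0.
rewrite -expr2 lerXn2r ?nnegrE ?enorm_ge0 //.
exact: le_trans (enorm_ge0 _) (d_le i).
Qed.

End OuterProductSum.

Lemma enorm_mulmx_le {R : realType} {n : nat} (H : 'M[R]_n) u k : 0 <= k ->
  (forall v, `|dotv (u *m H) v| <= k * (enorm u * enorm v)) ->
  enorm (u *m H) <= k * enorm u.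
Proof.
move=> k_ge0 form_le; have [uH0|uH_neq0] := eqVneq (enorm (u *m H)) 0.
  by rewrite uH0 mulr_ge0 ?enorm_ge0.
have uH_gt0 : 0 < enorm (u *m H) by rewrite lt_def uH_neq0 enorm_ge0.
rewrite -(ler_pM2r uH_gt0) -expr2 sqr_enorm -mulrA.
exact: le_trans (ler_norm _) (form_le _).
Qed.

Section InterpolationSystem.
Context {R : realType} {n p : nat}.
Variables (x : 'rV[R]_n) (Delta : R) (ys : 'I_p -> 'rV[R]_n) (f : 'rV[R]_n -> R).
Hypothesis Delta_neq0 : Delta != 0.
Hypothesis Fhat_unit : Fhat x Delta ys \in unitmx.

Lemma Fhat_mul_col_mx (a : 'cV[R]_p) (b : 'cV[R]_(1 + n)) :
  Fhat x Delta ys *m col_mx a b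
  = col_mx (Phat x Delta ys *m a + Mhat x Delta ys *m b) ((Mhat x Delta ys)^T *m a).
Proof. by rewrite mul_block_col mul0mx addr0. Qed.

Lemma Mhat_mul_affine (c : R) (g : 'rV[R]_n) i :
  (Mhat x Delta ys *m col_mx (const_mx c) (Delta *: g^T)) i 0 = c + dotv g (ys i - x).
Proof.
rewrite mul_row_col mxE [X in X + _]mxE big_ord1 !mxE mul1r; congr (_ + _).
by apply: eq_bigr => j _; rewrite !mxE; field.
Qed.

Lemma grad_model y :
  grad (model x Delta ys f) y = gmod x Delta ys f + (y - x) *m Hmod x Delta ys f.
Proof. by apply: grad_quadratic; exact: outer_sum_sym. Qed.

Lemma Phat_mul_lamhat i :
  (Phat x Delta ys *m usubmx (sol x Delta ys f)) i 0
  = 2^-1 * dotv ((ys i - x) *m Hmod x Delta ys f) (ys i - x).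
Proof.
rewrite outer_sum_form mxE mulr_sumr; apply: eq_bigr => k _.
rewrite [Phat _ _ _ i k]mxE [usubmx _ k 0]mxE /lam /lamhat.
rewrite /shat !dotvZl !dotvZr (dotvC (ys k - x)).
by field.
Qed.

Lemma dsubmx_sol :
  dsubmx (sol x Delta ys f)
  = col_mx (const_mx (cmod x Delta ys f)) (Delta *: (gmod x Delta ys f)^T).
Proof.
apply/colP => k; rewrite mxE; case: (split_ordP k) => [a ->|b ->].
  by rewrite col_mxEu (ord1 a) /cmod !mxE.
by rewrite col_mxEd /gmod linearZ /= scalerA mulfV // scale1r !mxE.
Qed.

Lemma model_interpolates i : model x Delta ys f (ys i) = f (ys i).
Proof.
have := congr1 (fun A => usubmx A i 0) (mulKVmx Fhat_unit (rhs ys f)).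
rewrite /= -/(sol x Delta ys f) -[sol _ _ _ _]vsubmxK Fhat_mul_col_mx !col_mxKu.
rewrite [X in X = _ -> _]mxE [X in _ = X -> _]mxE.
rewrite Phat_mul_lamhat dsubmx_sol Mhat_mul_affine => <-.
by rewrite /model dotv_mx addrC.
Qed.

Lemma usubmx_sol_residual :
  usubmx (sol x Delta ys f) = usubmx (invmx (Fhat x Delta ys) *m
    col_mx (\col_i (f (ys i) - f x - dotv (grad f x) (ys i - x))) 0).
Proof.
pose w : 'cV[R]_(1 + n) := col_mx (const_mx (f x)) (Delta *: (grad f x)^T).
rewrite /sol (_ : rhs ys f = Fhat x Delta ys *m col_mx 0 w
    + col_mx (\col_i (f (ys i) - f x - dotv (grad f x) (ys i - x))) 0).
  by rewrite mulmxDr mulKmx // linearD /= col_mxKu add0r.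
rewrite Fhat_mul_col_mx !mulmx0 add0r add_col_mx addr0; congr col_mx.
by apply/colP => i; rewrite [LHS]mxE [RHS]mxE Mhat_mul_affine mxE; ring.
Qed.

Lemma Mhat_inj (u : 'cV[R]_(1 + n)) : Mhat x Delta ys *m u = 0 -> u = 0.
Proof.
move=> Mu0; have := congr1 dsubmx (mulKmx Fhat_unit (col_mx 0 u)).
by rewrite Fhat_mul_col_mx Mu0 !mulmx0 add0r col_mx0 mulmx0 linear0 col_mxKd.
Qed.

End InterpolationSystem.

Section ModelError.
Context {R : realType} {n p : nat}.
Variables (f : 'rV[R]_n -> R) (L : R) (x : 'rV[R]_n) (Delta beta : R)
  (ys : 'I_p -> 'rV[R]_n) (Mdag : 'M[R]_(1 + n, p)).
Hypothesis f_diff : forall z, differentiable f z.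
Hypothesis grad_lip : forall z w, enorm (grad f z - grad f w) <= L * enorm (z - w).
Hypothesis L_ge0 : 0 <= L.
Hypothesis Delta_gt0 : 0 < Delta.
Hypothesis ys_near : forall i, enorm (ys i - x) <= beta * Delta.
Hypothesis Fhat_unit : Fhat x Delta ys \in unitmx.
Hypothesis Mdag_pinv : is_MP_pinv (Mhat x Delta ys) Mdag.

Let kH := L / 2 * p%:R * beta ^+ 4 * inf_norm (invmx (Fhat x Delta ys)).
Let kmf := (L + kH) / 2 * (1 + Num.sqrt n%:R) * beta ^+ 2 * inf_norm Mdag + (L + kH) / 2.
Let kmg := 2 * kmf + 2 * kH.
(* [Kc] bounds the entries of the coefficient errors [c - f x; Delta (g - grad f x)]. *)
Let Kc := inf_norm Mdag * ((L + kH) / 2 * (beta * Delta) ^+ 2).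

Let Delta_neq0 : Delta != 0. Proof. by rewrite gt_eqF. Qed.

Lemma kH_ge0 : 0 <= kH.
Proof.
rewrite /kH mulr_ge0 ?inf_norm_ge0 // mulr_ge0 ?exprn_even_ge0 //.
by rewrite mulr_ge0 ?divr_ge0 ?ler0n.
Qed.

Lemma taylor_residual_le i :
  `|f (ys i) - f x - dotv (grad f x) (ys i - x)| <= L / 2 * (beta * Delta) ^+ 2.
Proof.
have := descent_lemma x (ys i - x) f_diff grad_lip; rewrite [x + _]addrC subrK => le_r.
apply: le_trans le_r _; rewrite ler_wpM2l ?divr_ge0 // lerXn2r ?nnegrE ?enorm_ge0 //.
exact: le_trans (enorm_ge0 _) (ys_near i).
Qed.

Lemma lamhat_bound i :
  `|lamhat x Delta ys f i| <= inf_norm (invmx (Fhat x Delta ys)) * (L / 2 * (beta * Delta) ^+ 2).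
Proof.
have -> : lamhat x Delta ys f i = usubmx (sol x Delta ys f) i 0 by rewrite mxE.
rewrite usubmx_sol_residual // mxE; apply: norm_mulmx_le_inf_norm.
  by rewrite mulr_ge0 ?divr_ge0 ?sqr_ge0.
move=> k; case: (split_ordP k) => [a ->|b ->]; rewrite ?col_mxEu ?col_mxEd !mxE.
  exact: taylor_residual_le.
by rewrite normr0 mulr_ge0 ?divr_ge0 ?sqr_ge0.
Qed.

Lemma Hmod_form_bound u v :
  `|dotv (u *m Hmod x Delta ys f) v| <= kH * (enorm u * enorm v).
Proof.
set K := inf_norm (invmx (Fhat x Delta ys)) * (L / 2 * (beta * Delta) ^+ 2).
have lam_le i : `|lam x Delta ys f i| <= K / Delta ^+ 4.
  rewrite /lam normrM normfV (gtr0_norm (exprn_gt0 4 Delta_gt0)).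
  by rewrite ler_pM2r ?invr_gt0 ?exprn_gt0 // lamhat_bound.
suff <- : p%:R * (K / Delta ^+ 4) * (beta * Delta) ^+ 2 = kH.
  exact: (outer_sum_form_bound (d := fun i => ys i - x) u v lam_le ys_near).
by rewrite /kH /K; field.
Qed.

Lemma interpolation_error_le i :
  `|cmod x Delta ys f - f x + dotv (gmod x Delta ys f - grad f x) (ys i - x)|
  <= (L + kH) / 2 * (beta * Delta) ^+ 2.
Proof.
have := model_interpolates f Delta_neq0 Fhat_unit i; rewrite /model dotv_mx => interp.
have -> : cmod x Delta ys f - f x + dotv (gmod x Delta ys f - grad f x) (ys i - x)
    = (f (ys i) - f x - dotv (grad f x) (ys i - x))
      - 2^-1 * dotv ((ys i - x) *m Hmod x Delta ys f) (ys i - x).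
  by rewrite -interp dotvBl; ring.
apply: le_trans (ler_normB _ _) _.
have r2_le : enorm (ys i - x) ^+ 2 <= (beta * Delta) ^+ 2.
  by rewrite lerXn2r ?nnegrE ?enorm_ge0 ?(le_trans (enorm_ge0 _) (ys_near i)).
have := taylor_residual_le i; have := Hmod_form_bound (ys i - x) (ys i - x).
have := ler_wpM2l kH_ge0 r2_le.
rewrite normrM ger0_norm ?invr_ge0 // -expr2; lra.
Qed.

Lemma interpolation_bound_ge0 : 0 <= (L + kH) / 2 * (beta * Delta) ^+ 2.
Proof. by rewrite mulr_ge0 ?sqr_ge0 // divr_ge0 // addr_ge0 // kH_ge0. Qed.

Lemma Kc_ge0 : 0 <= Kc.
Proof. by rewrite mulr_ge0 ?inf_norm_ge0 ?interpolation_bound_ge0. Qed.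

Lemma coef_error_bound :
  `|cmod x Delta ys f - f x| <= Kc /\
  enorm (gmod x Delta ys f - grad f x) <= Num.sqrt n%:R * (Kc / Delta).
Proof.
pose v : 'cV[R]_(1 + n) := col_mx (const_mx (cmod x Delta ys f - f x))
                                  (Delta *: (gmod x Delta ys f - grad f x)^T).
have v_le k : `|v k 0| <= Kc.
  rewrite -(MP_pinv_mulKmx v Mdag_pinv (Mhat_inj Fhat_unit)).
  apply: norm_mulmx_le_inf_norm; first exact: interpolation_bound_ge0.
  by move=> i; rewrite (Mhat_mul_affine _ _ Delta_neq0) interpolation_error_le.
split; first by have := v_le (lshift n 0); rewrite col_mxEu mxE.
apply: enorm_le_coord => j; rewrite ler_pdivlMr //.
by have := v_le (rshift 1 j); rewrite col_mxEd !mxE normrM gtr0_norm // mulrC.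
Qed.

Lemma model_value_error y : enorm (y - x) <= Delta ->
  `|model x Delta ys f y - f y| <= kmf * Delta ^+ 2.
Proof.
move=> y_near; have [c_err g_err] := coef_error_bound.
have r2_le : enorm (y - x) ^+ 2 <= Delta ^+ 2.
  by rewrite lerXn2r ?nnegrE ?enorm_ge0 ?(ltW Delta_gt0).
have taylor := descent_lemma x (y - x) f_diff grad_lip.
rewrite [x + _]addrC subrK in taylor.
have form := Hmod_form_bound (y - x) (y - x); rewrite -expr2 in form.
have lin : `|dotv (gmod x Delta ys f - grad f x) (y - x)| <= Num.sqrt n%:R * Kc.
  apply: le_trans (ler_norm_dotv _ _) _.
  rewrite -[Kc in X in _ <= X](divfK Delta_neq0) mulrA.
  exact: ler_pM (enorm_ge0 _) (enorm_ge0 _) g_err y_near.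
have -> : model x Delta ys f y - f y = (cmod x Delta ys f - f x)
    + dotv (gmod x Delta ys f - grad f x) (y - x)
    + 2^-1 * dotv ((y - x) *m Hmod x Delta ys f) (y - x)
    - (f y - f x - dotv (grad f x) (y - x)).
  by rewrite /model dotv_mx dotvBl; ring.
have -> : kmf * Delta ^+ 2 = Kc + Num.sqrt n%:R * Kc + (L + kH) / 2 * Delta ^+ 2.
  by rewrite /kmf /Kc; ring.
apply: le_trans (ler_normB _ _) _.
have := ler_normD (cmod x Delta ys f - f x + dotv (gmod x Delta ys f - grad f x) (y - x))
  (2^-1 * dotv ((y - x) *m Hmod x Delta ys f) (y - x)).
have := ler_normD (cmod x Delta ys f - f x) (dotv (gmod x Delta ys f - grad f x) (y - x)).
have := ler_wpM2l kH_ge0 r2_le; have := ler_wpM2l L_ge0 r2_le.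
rewrite normrM ger0_norm ?invr_ge0 //; lra.
Qed.

Lemma model_grad_error y : enorm (y - x) <= Delta ->
  enorm (grad (model x Delta ys f) y - grad f y) <= kmg * Delta.
Proof.
move=> y_near; have [_ g_err] := coef_error_bound.
have uH_le := enorm_mulmx_le kH_ge0 (Hmod_form_bound (y - x)).
have lip := grad_lip y x.
have -> : kmg * Delta = 2 * (Kc / Delta) + 2 * (Num.sqrt n%:R * (Kc / Delta))
                        + L * Delta + 3 * kH * Delta.
  by rewrite /kmg /kmf /Kc; field.
have := ler_wpM2l kH_ge0 y_near; have := ler_wpM2l L_ge0 y_near.
have := divr_ge0 Kc_ge0 (ltW Delta_gt0); have := mulr_ge0 kH_ge0 (ltW Delta_gt0).
have := mulr_ge0 (sqrtr_ge0 n%:R) (divr_ge0 Kc_ge0 (ltW Delta_gt0)).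
rewrite grad_model; move: g_err lip uH_le.
move: (grad f x) (grad f y) (gmod x Delta ys f) ((y - x) *m Hmod x Delta ys f)
  => gx gy g uH g_err lip uH_le.
have -> : g + uH - gy = (g - gx) + uH - (gy - gx).
  by rewrite opprB addrA [g - gx + uH]addrAC subrK.
have := ler_enormD (g - gx + uH) (- (gy - gx)); have := ler_enormD (g - gx) uH.
rewrite enormN; lra.
Qed.

End ModelError.

Theorem theorem5p15 (R : realType) (n p : nat) (f : 'rV[R]_n -> R) (L : R)
  (x : 'rV[R]_n) (Delta beta : R) (ys : 'I_p -> 'rV[R]_n)
  (Mdag : 'M[R]_(1 + n, p)) :
  (n.+2 <= p)%N -> (p <= (n.+1 * n.+2)./2 - 1)%N ->
  (exists b : R, forall z, b <= f z) ->
  (forall z, differentiable f z) ->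
  continuous (grad f) ->
  (forall z w, enorm (grad f z - grad f w) <= L * enorm (z - w)) ->
  0 < Delta -> 0 < beta ->
  (forall i, enorm (ys i - x) <= beta * Delta) ->
  Fhat x Delta ys \in unitmx ->
  is_MP_pinv (Mhat x Delta ys) Mdag ->
  let kH := L / 2 * p%:R * beta ^+ 4 * inf_norm (invmx (Fhat x Delta ys)) in
  let kmf := (L + kH) / 2 * (1 + Num.sqrt n%:R) * beta ^+ 2 * inf_norm Mdag
             + (L + kH) / 2 in
  let kmg := 2 * kmf + 2 * kH in
  let m := model x Delta ys f in
  forall y : 'rV[R]_n, enorm (y - x) <= Delta ->
    `|m y - f y| <= kmf * Delta ^+ 2 /\
    enorm (grad m y - grad f y) <= kmg * Delta.
Proof.
move=> p_ge p_le _ f_diff _ grad_lip Delta_gt0 _ ys_near Fhat_unit Mdag_pinv.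
move=> kH kmf kmg m y y_near.
have n_gt0 : (0 < n)%N.
  by rewrite lt0n; apply/eqP => n0; move: p_ge p_le; rewrite n0 => /leq_trans le2 /le2.
have L_ge0 := lipschitz_ge0 n_gt0 grad_lip.
split.
- exact (model_value_error f_diff grad_lip L_ge0 Delta_gt0 ys_near Fhat_unit Mdag_pinv y_near).
- exact (model_grad_error f_diff grad_lip L_ge0 Delta_gt0 ys_near Fhat_unit Mdag_pinv y_near).
Qed.
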